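(* Let $G$ be the set of formal sums $f=\sum_{t}f_t\,t$ over reduced plane trees $t$, with $f_t\in\mathbb{C}$ and $f_{|}=1$ for the single-leaf tree $|$, equipped with the product $$f\circ g=\sum_{t_0}f_{t_0}\sum_{t_1,\dots,t_n}g_{t_1}\cdots g_{t_n}\; t_0\circ(t_1,\dots,t_n),$$ where $n$ is the number of leaves of $t_0$ and $t_1,\dots,t_n$ range over reduced plane trees. Identify each $f\in G$ with the noncommutative series $\sum_t f_t S^t\in\mathbb{C}\langle\langle S_0,S_1,\dots\rangle\rangle$, and write it $f(S_0;\mathbf S)$ with $\mathbf S=(S_1,S_2,\dots)$. Then for all $f,g\in G$, the series of $h=f\circ g$ is $h(S_0;\mathbf S)=f(g;\mathbf S)$, i.e. it is obtained from $\sum_t f_tS^t$ by substituting the series $\sum_t g_tS^t$ for every occurrence of $S_0$.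
   Context: A reduced plane tree is a rooted plane tree in which every internal vertex has at least two children. For a tree $t_0$ with $n$ leaves and trees $t_1,\dots,t_n$, $t_0\circ(t_1,\dots,t_n)$ is the tree obtained by replacing the leaves of $t_0$, from left to right, by $t_1,\dots,t_n$. The monomial $S^t$ is defined by $S^{|}=S_0$ and, if the root of $t$ has children subtrees $t_1,\dots,t_n$ ($n\ge2$), $S^t=S_{n-1}S^{t_1}\cdots S^{t_n}$ (the Polish code of $t$). $\mathbb{C}\langle\langle S_0,S_1,\dots\rangle\rangle$ is the completion of the free associative algebra on the noncommuting variables $S_0,S_1,\dots$ with respect to the degree in $S_0$. *)

From HB Require Import structures.
From mathcomp Require Import all_boot all_order all_algebra.
From mathcomp Require Import boolp classical_sets fsbigop.
From mathcomp Require Import Rstruct complex.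
Set Implicit Arguments. Unset Strict Implicit. Unset Printing Implicit Defensive.
Import Order.TTheory GRing.Theory Num.Theory.
Local Open Scope ring_scope.
Local Open Scope classical_set_scope.

Definition Cplx : Type := (Rdefinitions.R)[i].

(** Reduced plane trees: a leaf, or an internal vertex with an ordered list
    of at least two children  (children a :: b :: l). *)
Inductive rtree : Type :=
| Leaf : rtree
| Node : rtree -> rtree -> seq rtree -> rtree.

Definition children (a b : rtree) (l : seq rtree) : seq rtree := a :: b :: l.

Fixpoint rtree_enc (t : rtree) : GenTree.tree unit :=
  match t with
  | Leaf => GenTree.Node 0 [::]
  | Node a b l => GenTree.Node 1 (rtree_enc a :: rtree_enc b :: map rtree_enc l)
  end.
Fixpoint rtree_dec (x : GenTree.tree unit) : rtree :=
  match x with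
  | GenTree.Node 1 (a :: b :: l) => Node (rtree_dec a) (rtree_dec b) (map rtree_dec l)
  | _ => Leaf
  end.
Fixpoint rtree_encK (t : rtree) : rtree_dec (rtree_enc t) = t :=
  match t return rtree_dec (rtree_enc t) = t with
  | Leaf => erefl
  | Node a b l => f_equal3 Node (rtree_encK a) (rtree_encK b)
      ((fix F (l : seq rtree) : map rtree_dec (map rtree_enc l) = l :=
          match l with
          | [::] => erefl
          | x :: l' => f_equal2 cons (rtree_encK x) (F l')
          end) l)
  end.
HB.instance Definition _ := Countable.copy rtree (can_type rtree_encK).

Fixpoint nleaves (t : rtree) : nat :=
  match t with
  | Leaf => 1
  | Node a b l => nleaves a + nleaves b + sumn (map nleaves l)
  end.

(** Grafting: [graft_aux t ts] replaces the leaves of [t], from left to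
    right, by the first trees of [ts], returning the rest of [ts];
    [None] if [ts] is too short. *)
Fixpoint graft_aux (t : rtree) (ts : seq rtree) : option (rtree * seq rtree) :=
  match t with
  | Leaf => if ts is s :: ts' then Some (s, ts') else None
  | Node a b l =>
      match graft_aux a ts with
      | None => None
      | Some (a', ts1) =>
        match graft_aux b ts1 with
        | None => None
        | Some (b', ts2) =>
          let fix G (l : seq rtree) (ts : seq rtree)
              : option (seq rtree * seq rtree) :=
            match l with
            | [::] => Some ([::], ts)
            | c :: l' =>
              match graft_aux c ts with
              | None => None
              | Some (c', ts') =>
                match G l' ts' with
                | None => None
                | Some (l'', ts'') => Some (c' :: l'', ts'')
                end
              end
            end in
          match G l ts2 with
          | None => None
          | Some (l', ts3) => Some (Node a' b' l', ts3)
          end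
        end
      end
  end.

(** [graft t0 ts = Some (t0 o (t1,...,tn))] when [ts = [:: t1; ...; tn]] and
    n is the number of leaves of t0; [None] otherwise. *)
Definition graft (t0 : rtree) (ts : seq rtree) : option rtree :=
  match graft_aux t0 ts with
  | Some (t, [::]) => Some t
  | _ => None
  end.

Definition tsum := rtree -> Cplx.
Definition inG (f : tsum) : Prop := f Leaf = 1.

Definition tcomp (f g : tsum) : tsum := fun t =>
  \sum_(p \in [set p : rtree * seq rtree | graft p.1 p.2 = Some t])
     (f p.1 * \prod_(s <- p.2) g s).

(** Polish code: letter i stands for S_i; S^| = S_0 and a vertex with
    n >= 2 children contributes S_{n-1}. *)
Fixpoint code (t : rtree) : seq nat :=
  match t with
  | Leaf => [:: 0%N]
  | Node a b l => (size l).+1 :: code a ++ code b ++ flatten (map code l)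
  end.

(** Noncommutative series in S_0, S_1, ...: coefficient functions on words
    (words are [seq nat], letter i = S_i). *)
Definition ncseries := seq nat -> Cplx.

Definition series (f : tsum) : ncseries := fun w =>
  \sum_(t \in [set t : rtree | code t = w]) f t.

(** [expand u vs]: the word obtained from the word [u] by replacing its
    successive occurrences of the letter S_0 by the words of [vs]
    (None if the number of S_0's in u differs from size vs). *)
Fixpoint expand (u : seq nat) (vs : seq (seq nat)) : option (seq nat) :=
  match u with
  | [::] => if vs is [::] then Some [::] else None
  | 0%N :: u' =>
      if vs is v :: vs' then omap (fun r => v ++ r) (expand u' vs') else None
  | i :: u' => omap (cons i) (expand u' vs)
  end.

(** Substitution F(G; S): replace every occurrence of S_0 in F by G. *)
Definition subst0 (F G : ncseries) : ncseries := fun w =>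
  \sum_(p \in [set p : seq nat * seq (seq nat) | expand p.1 p.2 = Some w])
     (F p.1 * \prod_(v <- p.2) G v).

(* The Polish code is injective (indeed prefix-free), and it turns grafting
   into substitution: the letters S_0 of code t0 are its leaves in left to
   right order, so code (t0 o (t1,...,tn)) is code t0 with its successive S_0
   replaced by code t1, ..., code tn.  Hence both sides of the identity are the
   same sum over pairs (t0, [t1;...;tn]), pushed forward along the injective map
   (t0, ts) |-> (code t0, map code ts); words outside the image of the code carry
   the coefficient 0 in every series. *)
From HB Require Import structures.
From mathcomp Require Import all_boot all_order all_algebra.
From mathcomp Require Import boolp classical_sets fsbigop.
From mathcomp Require Import Rstruct complex.
From Stdlib Require List.
Set Implicit Arguments. Unset Strict Implicit. Unset Printing Implicit Defensive.
Import Order.TTheory GRing.Theory Num.Theory.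
Local Open Scope ring_scope.
Local Open Scope classical_set_scope.

Definition rtree_deep_ind (P : rtree -> Prop) (PLeaf : P Leaf)
    (PNode : forall a b l, P a -> P b -> List.Forall P l -> P (Node a b l)) :
  forall t, P t :=
  fix F t := match t return P t with
  | Leaf => PLeaf
  | Node a b l => PNode a b l (F a) (F b)
      ((fix G l : List.Forall P l := match l return List.Forall P l with
         | [::] => List.Forall_nil P
         | x :: l' => List.Forall_cons x (F x) (G l') end) l)
  end.

(* [expand_rest u vs] expands [u] with a prefix of [vs] and also returns the
   unused words; unlike [expand] it is compatible with concatenation. *)
Fixpoint expand_rest (u : seq nat) (vs : seq (seq nat)) :
    option (seq nat * seq (seq nat)) :=
  match u with
  | [::] => Some ([::], vs)
  | 0%N :: u' =>
      if vs is v :: vs' then omap (fun p => (v ++ p.1, p.2)) (expand_rest u' vs')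
      else None
  | i :: u' => omap (fun p => (i :: p.1, p.2)) (expand_rest u' vs)
  end.

Lemma expandE u vs : expand u vs =
  if expand_rest u vs is Some (w, [::]) then Some w else None.
Proof.
elim: u vs => [|[|i] u IH] [|v vs] //=; rewrite ?IH;
  by case: (expand_rest u _) => [[w [|r rs]]|].
Qed.

Lemma expand_rest_cat u1 u2 vs : expand_rest (u1 ++ u2) vs =
  obind (fun p => omap (fun q => (p.1 ++ q.1, q.2)) (expand_rest u2 p.2))
        (expand_rest u1 vs).
Proof.
elim: u1 vs => [|[|i] u1 IH] vs /=.
- by case: (expand_rest u2 vs) => [[]|].
- case: vs => [|v vs] //=; rewrite IH.
  case: (expand_rest u1 vs) => [[a r]|] //=.
  by case: (expand_rest u2 r) => [[b r']|] //=; rewrite catA.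
- rewrite IH; case: (expand_rest u1 vs) => [[a r]|] //=.
  by case: (expand_rest u2 r) => [[b r']|].
Qed.

Fixpoint graft_seq (l ts : seq rtree) : option (seq rtree * seq rtree) :=
  match l with
  | [::] => Some ([::], ts)
  | c :: l' =>
    match graft_aux c ts with
    | None => None
    | Some (c', ts') =>
      match graft_seq l' ts' with
      | None => None
      | Some (l'', ts'') => Some (c' :: l'', ts'')
      end
    end
  end.

Lemma graft_auxE a b l ts : graft_aux (Node a b l) ts =
  match graft_aux a ts with
  | None => None
  | Some (a', ts1) =>
    match graft_aux b ts1 with
    | None => None
    | Some (b', ts2) =>
      match graft_seq l ts2 with
      | None => None
      | Some (l', ts3) => Some (Node a' b' l', ts3)
      end
    end
  end.
Proof. by []. Qed.

Lemma size_graft_seq l ts l' r : graft_seq l ts = Some (l', r) -> size l' = size l.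
Proof.
elim: l ts l' r => [|c l IH] ts l' r /=; first by case=> <-.
case: (graft_aux c ts) => [[c' ts']|] //.
by case E: (graft_seq l ts') => [[l'' ts'']|] // [<- _] /=; rewrite (IH _ _ _ E).
Qed.

Lemma expand_rest_code_seq l :
  List.Forall (fun t => forall ts, expand_rest (code t) (map code ts) =
    omap (fun p => (code p.1, map code p.2)) (graft_aux t ts)) l ->
  forall ts, expand_rest (flatten (map code l)) (map code ts) =
    omap (fun p => (flatten (map code p.1), map code p.2)) (graft_seq l ts).
Proof.
elim: l => [|c l IH] //= /List.Forall_cons_iff[IHc IHl] ts.
rewrite expand_rest_cat IHc; case: (graft_aux c ts) => [[c' ts']|] //=.
by rewrite IH //; case: (graft_seq l ts') => [[l'' ts'']|].
Qed.

Lemma expand_rest_code t ts : expand_rest (code t) (map code ts) =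
  omap (fun p => (code p.1, map code p.2)) (graft_aux t ts).
Proof.
elim/rtree_deep_ind: t ts => [|a b l IHa IHb IHl] ts.
  by case: ts => [|s ts] //=; rewrite cats0.
rewrite graft_auxE /= expand_rest_cat IHa.
case: (graft_aux a ts) => [[a' r1]|] //=.
rewrite expand_rest_cat IHb; case: (graft_aux b r1) => [[b' r2]|] //=.
rewrite expand_rest_code_seq //.
by case E: (graft_seq l r2) => [[l' r3]|] //=; rewrite (size_graft_seq E).
Qed.

Lemma code_graft t ts : omap code (graft t ts) = expand (code t) (map code ts).
Proof.
rewrite expandE expand_rest_code /graft.
by case: (graft_aux t ts) => [[t' [|r rs]]|].
Qed.

Lemma code_seq_cat_inj l :
  List.Forall (fun t => forall t' r r',
    code t ++ r = code t' ++ r' -> t = t' /\ r = r') l ->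
  forall l' r r', size l = size l' ->
  flatten (map code l) ++ r = flatten (map code l') ++ r' -> l = l' /\ r = r'.
Proof.
elim: l => [|c l IH] /=; first by move=> _ [|c' l'] r r' //= _ ->.
move=> /List.Forall_cons_iff[IHc IHl] [|c' l'] r r' //= [size_l].
rewrite -!catA => /IHc[-> /(IH IHl _ _ _ size_l)[-> ->]].
by [].
Qed.

Lemma code_cat_inj t t' r r' : code t ++ r = code t' ++ r' -> t = t' /\ r = r'.
Proof.
elim/rtree_deep_ind: t t' r r' => [|a b l IHa IHb IHl] [|a' b' l'] r r' //=.
- by case.
- case=> size_l; rewrite -!catA => /IHa[-> /IHb[-> /(code_seq_cat_inj IHl)]].
  by move=> /(_ size_l)[-> ->].
Qed.

Lemma code_inj : injective code.
Proof.
move=> t t' e; have := @code_cat_inj t t' [::] [::].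
by rewrite !cats0 => /(_ e)[].
Qed.

Lemma graft_code t ts t' :
  graft t ts = Some t' <-> expand (code t) (map code ts) = Some (code t').
Proof.
rewrite -code_graft; split=> [-> //|].
by case: (graft t ts) => //= s [/code_inj ->].
Qed.

Lemma series_code (f : tsum) t : series f (code t) = f t.
Proof.
rewrite /series.
have -> : [set t' : rtree | code t' = code t] = [set t].
  by apply/seteqP; split => x /=; [move/code_inj | move->].
by rewrite fsbig_set1.
Qed.

Lemma series_nocode (f : tsum) u : ~ (exists t, code t = u) -> series f u = 0.
Proof.
move=> not_code; rewrite /series.
have -> : [set t' : rtree | code t' = u] = set0.
  by apply/seteqP; split => x //= e; apply: not_code; exists x.
by rewrite fsbig_set0.
Qed.

Lemma prod_series_nocodes (g : tsum) (vs : seq (seq nat)) :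
  ~ (exists ts, map code ts = vs) -> \prod_(v <- vs) series g v = 0.
Proof.
elim: vs => [|v vs IH] not_codes; first by case: not_codes; exists [::].
rewrite big_cons; have [[s code_s]|not_code] := pselect (exists s, code s = v).
  rewrite IH ?mulr0 // => -[ts eq_ts].
  by apply: not_codes; exists (s :: ts); rewrite /= code_s eq_ts.
by rewrite series_nocode ?mul0r.
Qed.

Section Composition.
Variables f g : tsum.

Definition graft_weight (p : rtree * seq rtree) : Cplx :=
  f p.1 * \prod_(s <- p.2) g s.

Lemma subst0_seriesE w : subst0 (series f) (series g) w =
  \sum_(p \in [set p : rtree * seq rtree |
           expand (code p.1) (map code p.2) = Some w]) graft_weight p.
Proof.
set P := [set p | _].
pose encode (p : rtree * seq rtree) := (code p.1, map code p.2).
rewrite /subst0; transitivity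
  (\sum_(q \in encode @` P) (series f q.1 * \prod_(v <- q.2) series g v)).
  apply/esym/fsbig_widen => [q [p Pp <-] //|[u vs] /= [expand_w not_image]].
  have [[t code_t]|not_code] := pselect (exists t, code t = u); last first.
    by rewrite series_nocode ?mul0r.
  rewrite prod_series_nocodes ?mulr0 // => -[ts eq_ts].
  by apply: not_image; exists (t, ts); rewrite /P /encode /= code_t eq_ts.
rewrite fsbig_image => [|[t ts] [t' ts'] _ _ [/code_inj -> /(inj_map code_inj) ->] //].
apply: eq_fsbigr => -[t ts] _; rewrite /encode /graft_weight /= series_code big_map.
by congr (_ * _); apply: eq_bigr => s _; rewrite series_code.
Qed.

Lemma series_tcompE w : series (tcomp f g) w =
  \sum_(p \in [set p : rtree * seq rtree |
           expand (code p.1) (map code p.2) = Some w]) graft_weight p.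
Proof.
have [[t <-]|not_code] := pselect (exists t, code t = w).
  rewrite series_code /tcomp; apply: eq_fsbigl.
  by apply/seteqP; split=> p /graft_code.
rewrite series_nocode //.
have -> : [set p : rtree * seq rtree | expand (code p.1) (map code p.2) = Some w]
    = set0.
  apply/seteqP; split=> // -[t ts] /=; rewrite -code_graft.
  by case: (graft t ts) => //= t' [code_t']; apply: not_code; exists t'.
by rewrite fsbig_set0.
Qed.

End Composition.

Theorem mainTheorem7 (f g : tsum) :
  inG f -> inG g -> series (tcomp f g) = subst0 (series f) (series g).
Proof.
move=> _ _; apply: funext => w.
by rewrite series_tcompE subst0_seriesE.
Qed.
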